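(* Let $d \ge 1$. There exists a ReLU network $f:\mathbb{R}^d\to\mathbb{R}$ with $d$ inputs, one hidden layer of $d$ ReLU neurons, and one output, i.e. a function of the form $f(z) = c_0 + \sum_{k=1}^{d} c_k\,\mathrm{ReLU}(w_k^\top z + b_k)$ with $c_k, b_k \in \mathbb{R}$, $w_k\in\mathbb{R}^d$, such that for all $x \in \mathbb{R}^d$ and all $\xi \in \mathbb{R}$, $$f(x - \xi 1_d) \le 0 \iff \max\{x_1,\dots,x_d\} \le \xi,$$ where $1_d$ is the all-ones vector in $\mathbb{R}^d$.
   Context: $\mathrm{ReLU}(t)=\max(t,0)$. The expression $x-\xi$ in the paper denotes subtracting the scalar $\xi$ from every coordinate of $x$, written here as $x-\xi 1_d$. *)

From mathcomp Require Import all_boot all_order all_algebra.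
Set Implicit Arguments. Unset Strict Implicit. Unset Printing Implicit Defensive.
Import Order.TTheory GRing.Theory Num.Theory.
Local Open Scope ring_scope.

Definition relu {R : realDomainType} (t : R) : R := Num.max t 0.

Definition relu_net {R : realDomainType} (d : nat) (c0 : R) (c b : 'I_d -> R)
  (w : 'I_d -> 'I_d -> R) (z : 'I_d -> R) : R :=
  c0 + \sum_(k < d) c k * relu (\sum_(j < d) w k j * z j + b k).

(* maximum of the coordinates of x in R^d, for d >= 1: the fold of Num.max
   over all coordinates, seeded with the first coordinate x_1 (the seed is
   0 only in the meaningless case d = 0). *)
Definition vmax {R : realDomainType} (d : nat) (x : 'I_d -> R) : R :=
  \big[Num.max/head 0 [seq x i | i <- enum 'I_d]]_(i < d) x i.

From mathcomp Require Import all_boot all_order all_algebra.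
From mathcomp Require Import reals.
Set Implicit Arguments. Unset Strict Implicit. Unset Printing Implicit Defensive.
Import Order.TTheory GRing.Theory Num.Theory.
Local Open Scope ring_scope.

(* With identity weights, zero biases and unit output weights the network
   computes sum_k ReLU(x_k - xi); this is a sum of nonnegative terms, so it is
   nonpositive exactly when every x_k - xi is. *)

Lemma sum_kronecker (R : pzSemiRingType) (I : finType) (k : I) (z : I -> R) :
  \sum_j (k == j)%:R * z j = z k.
Proof.
under eq_bigr => j _ do rewrite eq_sym mulr_natl mulrb.
by rewrite -big_mkcond big_pred1_eq.
Qed.

Section Relu.
Variable R : realDomainType.

Lemma relu_ge0 (t : R) : 0 <= relu t.
Proof. by rewrite le_max lexx orbT. Qed.

Lemma relu_le0 (t : R) : (relu t <= 0) = (t <= 0).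
Proof. by rewrite ge_max lexx andbT. Qed.

Lemma sum_relu_le0P (I : finType) (z : I -> R) :
  reflect (forall i, z i <= 0) (\sum_i relu (z i) <= 0).
Proof.
rewrite le_eqVlt ltNge sumr_ge0 ?orbF => [|i _]; last exact: relu_ge0.
rewrite psumr_eq0 => [|i _]; last exact: relu_ge0.
apply: (iffP allP) => [z_le0 i | z_le0 i _].
- by rewrite -relu_le0 (eqP (z_le0 i (mem_index_enum i))).
- by rewrite eq_le relu_ge0 relu_le0 z_le0.
Qed.

Lemma relu_net_identity (d : nat) (z : 'I_d -> R) :
  relu_net 0 (fun=> 1) (fun=> 0) (fun k j => (k == j)%:R) z
  = \sum_k relu (z k).
Proof.
rewrite /relu_net add0r; apply: eq_bigr => k _.
by rewrite mul1r addr0 sum_kronecker.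
Qed.

Lemma vmax_leP (d : nat) (x : 'I_d -> R) (xi : R) : (0 < d)%N ->
  reflect (forall i, x i <= xi) (vmax x <= xi).
Proof.
case: d x => // d x _; rewrite /vmax enum_ordSl /=.
apply: (iffP (bigmax_leP _ _ _ _)) => [[_ x_le] i | x_le].
- exact: x_le.
- by split=> [|i _]; apply: x_le.
Qed.

End Relu.

Theorem theorem1 (R : realType) (d : nat) (hd : (1 <= d)%N) :
  exists (c0 : R) (c b : 'I_d -> R) (w : 'I_d -> 'I_d -> R),
    forall (x : 'I_d -> R) (xi : R),
      (relu_net c0 c b w (fun j => x j - xi) <= 0) <-> (vmax x <= xi).
Proof.
exists 0, (fun=> 1), (fun=> 0), (fun k j => (k == j)%:R) => x xi.
rewrite relu_net_identity.
split=> [/sum_relu_le0P x_le | /(vmax_leP x xi hd) x_le].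
- by apply/(vmax_leP x xi hd) => i; rewrite -subr_le0.
- by apply/sum_relu_le0P => i; rewrite subr_le0.
Qed.
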